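(* For each random forest with majority voting there exists an equivalent boosted tree ensemble (i.e., one computing the same classification function) whose size is polynomial in the size of the starting random forest.
   Context: Features $\mathcal{F}$ with domains $D_i$, feature space $\mathbb{F}=\prod_i D_i$, finite class set $\mathcal{K}$. A decision tree is a binary rooted tree with internal nodes labeled by split conditions $x_i<d$; each point reaches a unique leaf. A random forest with majority voting has leaves labeled by classes and predicts the class voted by the largest number of trees. A boosted tree ensemble consists of decision trees partitioned into groups, one per class, each leaf carrying a real weight; the score of a class at $\mathbf{x}$ is the sum of the weights of the leaves reached by $\mathbf{x}$ in the trees of that class's group, and the prediction is a class of maximal score. Size is measured as the total number of tree nodes. *)

From HB Require Import structures.
From mathcomp Require Import all_boot all_order all_algebra.
From mathcomp Require Import reals.
Set Implicit Arguments. Unset Strict Implicit. Unset Printing Implicit Defensive.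
Import Order.TTheory GRing.Theory Num.Theory.

Section Trees.
Variables (F : Type) (D : F -> Type) (lt : forall i, D i -> D i -> bool).

Inductive dtree (L : Type) : Type :=
  | Leaf of L
  | Node (i : F) (d : D i) of dtree L & dtree L.

Fixpoint dt_eval (L : Type) (t : dtree L) (x : forall i, D i) : L :=
  match t with
  | Leaf l => l
  | Node i d t1 t2 => if lt (x i) d then dt_eval t1 x else dt_eval t2 x
  end.

Fixpoint dt_size (L : Type) (t : dtree L) : nat :=
  match t with
  | Leaf _ => 1
  | Node _ _ t1 t2 => (dt_size t1 + dt_size t2).+1
  end.

Definition rf_votes (K : eqType) (rf : seq (dtree K)) (x : forall i, D i) (k : K) : nat :=
  count (fun t => dt_eval t x == k) rf.

Definition rf_pred (K : eqType) (rf : seq (dtree K)) (x : forall i, D i) (k : K) : Prop :=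
  forall k', rf_votes rf x k' <= rf_votes rf x k.

Definition rf_size (K : Type) (rf : seq (dtree K)) : nat :=
  \sum_(t <- rf) dt_size t.

Definition bt_score (R : realType) (K : Type) (bt : K -> seq (dtree R))
  (x : forall i, D i) (k : K) : R :=
  (\sum_(t <- bt k) dt_eval t x)%R.

Definition bt_pred (R : realType) (K : Type) (bt : K -> seq (dtree R))
  (x : forall i, D i) (k : K) : Prop :=
  forall k', (bt_score bt x k' <= bt_score bt x k)%R.

Definition bt_size (R : realType) (K : finType) (bt : K -> seq (dtree R)) : nat :=
  \sum_(k : K) \sum_(t <- bt k) dt_size t.

End Trees.

From HB Require Import structures.
From mathcomp Require Import all_boot all_order all_algebra.
From mathcomp Require Import reals zify.
Set Implicit Arguments. Unset Strict Implicit. Unset Printing Implicit Defensive.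
Import Order.TTheory GRing.Theory Num.Theory.

(* Give class k one group containing, for every tree of the forest having a
   leaf labelled k, the same tree with each leaf relabelled 1 if it is k and 0
   otherwise.  The score of k is then exactly its number of votes, so both
   ensembles predict the same classes.  A tree of size s occurs in at most s
   groups, hence the ensemble has size at most the sum of the s^2, which is at
   most the square of the size of the forest. *)

Lemma sum_sqr_leq_sqr_sum {I : Type} (r : seq I) (f : I -> nat) :
  \sum_(i <- r) f i * f i <= (\sum_(i <- r) f i) ^ 2.
Proof. by elim: r => [|i r IHr]; rewrite ?big_nil // !big_cons; nia. Qed.

Section DecisionTrees.
Variables (F : Type) (D : F -> Type) (lt : forall i, D i -> D i -> bool).

Fixpoint dt_map {L L' : Type} (f : L -> L') (t : dtree D L) : dtree D L' :=
  match t with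
  | Leaf l => @Leaf F D L' (f l)
  | Node i d t1 t2 => @Node F D L' i d (dt_map f t1) (dt_map f t2)
  end.

Fixpoint dt_leaves {L : Type} (t : dtree D L) : seq L :=
  match t with
  | Leaf l => [:: l]
  | Node _ _ t1 t2 => dt_leaves t1 ++ dt_leaves t2
  end.

Lemma dt_eval_map (L L' : Type) (f : L -> L') t x :
  dt_eval lt (dt_map f t) x = f (dt_eval lt t x).
Proof. by elim: t => [l|i d t1 IH1 t2 IH2] //=; case: ifP. Qed.

Lemma dt_size_map (L L' : Type) (f : L -> L') t :
  dt_size (dt_map f t) = dt_size t.
Proof. by elim: t => [l|i d t1 IH1 t2 IH2] //=; rewrite IH1 IH2. Qed.

Lemma dt_eval_in_leaves (L : eqType) (t : dtree D L) x :
  dt_eval lt t x \in dt_leaves t.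
Proof.
elim: t => [l|i d t1 IH1 t2 IH2] /=; first by rewrite inE.
by case: ifP => _; rewrite mem_cat ?IH1 ?IH2 ?orbT.
Qed.

Lemma size_dt_leaves (L : Type) (t : dtree D L) : size (dt_leaves t) <= dt_size t.
Proof.
elim: t => [l|i d t1 IH1 t2 IH2] //=.
by rewrite size_cat leqW ?leq_add.
Qed.

Section RandomForestToBoosted.
Variables (R : realType) (K : finType).

Definition rf_to_bt (rf : seq (dtree D K)) (k : K) : seq (dtree D R) :=
  [seq dt_map (fun l => (l == k)%:R%R) t | t <- rf & k \in dt_leaves t].

Lemma bt_score_rf_to_bt rf x k :
  bt_score lt (rf_to_bt rf) x k = (rf_votes lt rf x k)%:R%R.
Proof.
rewrite /bt_score /rf_votes big_map big_filter big_mkcond.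
elim: rf => [|t rf IHrf]; first by rewrite big_nil.
rewrite big_cons IHrf /= natrD dt_eval_map; congr (_ + _)%R.
case: ifP => // k_notin_t; case: eqP => // eval_k.
by rewrite -eval_k dt_eval_in_leaves in k_notin_t.
Qed.

Lemma bt_pred_rf_to_bt rf x k :
  bt_pred lt (rf_to_bt rf) x k <-> rf_pred lt rf x k.
Proof.
rewrite /bt_pred /rf_pred.
by split=> maxk k'; have := maxk k'; rewrite !bt_score_rf_to_bt ler_nat.
Qed.

Lemma bt_size_rf_to_bt rf : bt_size (rf_to_bt rf) <= rf_size rf ^ 2.
Proof.
have tree_groups t : \sum_(k : K) (if k \in dt_leaves t then dt_size t else 0)
    <= dt_size t * dt_size t.
  rewrite -big_mkcond sum_nat_const leq_mul2r.
  by rewrite (leq_trans (card_size _)) ?size_dt_leaves ?orbT.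
rewrite /bt_size /rf_to_bt.
under eq_bigr => k _ do rewrite big_map big_filter big_mkcond.
rewrite exchange_big /= (leq_trans _ (sum_sqr_leq_sqr_sum rf (@dt_size F D K))) //.
apply: leq_sum => t _; under eq_bigr => k _ do rewrite dt_size_map.
exact: tree_groups.
Qed.

End RandomForestToBoosted.
End DecisionTrees.

Theorem mainTheorem4 :
  exists c e : nat,
    forall (R : realType) (F : Type) (D : F -> Type)
           (lt : forall i, D i -> D i -> bool) (K : finType)
           (rf : seq (dtree D K)),
    exists bt : K -> seq (dtree D R),
      (forall (x : forall i, D i) (k : K),
          rf_pred lt rf x k <-> bt_pred lt bt x k) /\
      bt_size bt <= c * (rf_size rf).+1 ^ e.
Proof.
exists 1, 2 => R F D lt K rf.
exists (rf_to_bt R rf); split.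
  by move=> x k; rewrite bt_pred_rf_to_bt.
by rewrite mul1n (leq_trans (bt_size_rf_to_bt R rf)) // leq_exp2r.
Qed.
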